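(* For every graph $G$ on $n$ vertices, $G$ can be turned into a word-representable graph on the same vertex set by adding or deleting at most $\min\{|E(G)|/3,\ \binom n2-|E(G)|\}$ edges; that is, $\binom n2\,\mathrm{dist}(G,\mathcal H_{\rm word})\le\min\{|E(G)|/3,\binom n2-|E(G)|\}$. In particular $\mathrm{dist}(G,\mathcal H_{\rm word})\le 1/4$.
   Context: A word over alphabet $V$ represents a graph $G=(V,E)$ if for all distinct $x,y\in V$: $xy\in E$ iff the occurrences of $x$ and $y$ alternate in the word; $\mathcal H_{\rm word}$ is the class of graphs admitting such a word. For graphs $G,H$ on the same $n$-vertex set, $\mathrm{dist}(G,H)=|E(G)\triangle E(H)|/\binom n2$ and $\mathrm{dist}(G,\mathcal H)=\min\{\mathrm{dist}(G,H):H\in\mathcal H, V(H)=V(G)\}$. *)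

From HB Require Import structures.
From mathcomp Require Import all_boot all_order all_algebra.
Set Implicit Arguments. Unset Strict Implicit. Unset Printing Implicit Defensive.
Import Order.TTheory GRing.Theory Num.Theory.

Definition simple_graph (V : finType) (E : {set {set V}}) : Prop :=
  forall e, e \in E -> #|e| = 2.

Definition alternate (V : finType) (w : seq V) (x y : V) : bool :=
  sorted (fun a b : V => a != b) [seq z <- w | (z == x) || (z == y)].

Definition represents (V : finType) (w : seq V) (E : {set {set V}}) : Prop :=
  (forall x : V, x \in w) /\
  (forall x y : V, x != y -> ([set x; y] \in E) = alternate w x y).

Definition word_representable (V : finType) (E : {set {set V}}) : Prop :=
  simple_graph E /\ exists w : seq V, represents w E.

Definition symdiff (T : finType) (A B : {set T}) : {set T} := (A :\: B) :|: (B :\: A).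

From mathcomp Require Import all_boot all_order all_algebra.
From mathcomp Require Import zify lra.
Set Implicit Arguments. Unset Strict Implicit. Unset Printing Implicit Defensive.
Import Order.TTheory GRing.Theory Num.Theory.

(* A uniformly random 3-colouring leaves each edge monochromatic with
   probability 1/3, so some colouring has at most |E|/3 monochromatic edges;
   deleting them leaves a properly 3-coloured graph, and 3-colourable graphs
   are word-representable.  For those, orient every edge towards the larger
   colour and, for each vertex v, list first the vertices from which v can be
   reached, then the others, each group by increasing colour.  Every such
   permutation puts the tail of an arc before its head, so concatenations keep
   adjacent pairs alternating; the permutations of x and y put a non-adjacent
   pair in opposite orders unless one reaches the other, which is then
   repaired by an extra segment.  If instead |E|/3 exceeds the number of
   non-edges, the complete graph, represented by any permutation of V, is
   closer. *)

Section SortBy.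
Variable T : eqType.
Implicit Types (k : T -> nat) (s : seq T).

Definition sort_by k s := sort (fun a b => k a <= k b) s.

Lemma filter2_sort_by k s x y : uniq s -> k x < k y ->
  [seq z <- sort_by k s | (z == x) || (z == y)] = [seq z <- [:: x; y] | z \in s].
Proof.
move=> us ltxy; have nxy : x != y by apply: contraTneq ltxy => ->; rewrite ltnn.
have leT_total : total (fun a b => k a <= k b) by move=> a b; apply: leq_total.
have leT_tr : transitive (fun a b => k a <= k b) by move=> b a c; apply: leq_trans.
rewrite filter_sort // -[RHS](sorted_sort leT_tr); last first.
  by apply: (sorted_filter leT_tr); rewrite /= andbT ltnW.
apply/perm_sort_inP => [a b _ _|a b c _ _ _|a b|]; [exact: leT_total|exact: leT_tr| |].
  rewrite !mem_filter => /andP[/orP[]/eqP-> _] /andP[/orP[]/eqP-> _] //; case/andP; lia.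
apply: uniq_perm => [||z]; [exact: filter_uniq|apply: filter_uniq; by rewrite /= inE andbT|].
by rewrite !mem_filter !inE andbC.
Qed.

End SortBy.

Lemma neq_sorted_uniq (T : eqType) (s : seq T) : uniq s -> sorted (fun a b => a != b) s.
Proof. by move=> us; apply: pairwise_sorted; rewrite -uniq_pairwise. Qed.

Lemma infix_flatten (T : eqType) (L : seq (seq T)) l : l \in L -> infix l (flatten L).
Proof. by case/splitPr=> L1 L2; rewrite flatten_cat /=; apply: infix_infix. Qed.

Lemma filter2C (T : eqType) (s : seq T) x y :
  [seq z <- s | (z == x) || (z == y)] = [seq z <- s | (z == y) || (z == x)].
Proof. by apply: eq_filter => z; rewrite orbC. Qed.

Lemma alternateC (V : finType) (w : seq V) x y : alternate w x y = alternate w y x.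
Proof. by rewrite /alternate filter2C. Qed.

Definition repeat2 (T : Type) (x y : T) n := flatten (nseq n [:: x; y]).

Lemma flatten_repeat2 (T : Type) (x y : T) ns :
  flatten [seq repeat2 x y n | n <- ns] = repeat2 x y (sumn ns).
Proof. by elim: ns => //= n ns ->; rewrite /repeat2 nseqD flatten_cat. Qed.

Lemma neq_sorted_repeat2 (T : eqType) (x y : T) n : x != y ->
  sorted (fun a b => a != b) (repeat2 x y n).
Proof.
move=> nxy; case: n => //= n; rewrite nxy /=.
by elim: n => //= n ->; rewrite eq_sym nxy.
Qed.

Lemma not_sorted_stutter (T : eqType) (s : seq T) z :
  infix [:: z; z] s -> ~~ sorted (fun a b => a != b) s.
Proof. by move=> zz; apply/negP => /(infix_sorted zz) /=; rewrite eqxx. Qed.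

Section ThreeColourable.
Variables (V : finType) (H : {set {set V}}) (col : V -> 'I_3).
Hypothesis col_proper : forall x y, x != y -> [set x; y] \in H -> col x != col y.

Definition up_arc x y := (col x < col y) && ([set x; y] \in H).

(* Colours increase strictly along up-arcs, so directed paths have length at most 2. *)
Definition reaches u v := [|| u == v, up_arc u v | [exists w, up_arc u w && up_arc w v]].
Definition reach_rank v u := (if reaches u v then 0 else 3) + col u.
Definition reach_perm v := sort_by (reach_rank v) (enum V).
Definition special_pair x y :=
  [&& col x == 0 :> nat, col y == 2 :> nat & [set x; y] \notin H].

(* Each [reach_perm] lists a special pair in the order x, y; the segment makes
   x and y occur twice in a row, while every up-arc still alternates in it. *)
Definition special_segment x y :=
  sort_by col (enum [set~ y]) ++ [:: x; y] ++ sort_by col (enum [set~ x]).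
Definition pair_block x y :=
  reach_perm x ++ reach_perm y ++ (if special_pair x y then special_segment x y else [::]).
Definition colouring_word := flatten [seq pair_block p.1 p.2 | p : V * V].

Lemma up_arc_neq x y : up_arc x y -> x != y.
Proof. by case/andP=> lt _; apply: contraTneq lt => ->; rewrite ltnn. Qed.

Lemma reachesxx u : reaches u u.
Proof. by rewrite /reaches eqxx. Qed.

Lemma reaches_up_arc v x y : up_arc x y -> reaches y v -> reaches x v.
Proof.
move=> axy /or3P[/eqP<-|ayv|/existsP[w /andP[ayw awv]]]; rewrite /reaches.
- by rewrite axy orbT.
- by apply/or3P/Or33/existsP; exists y; rewrite axy ayv.
- move: axy ayw awv (ltn_ord (col v)) => /andP[? _] /andP[? _] /andP[? _]; lia.
Qed.

Lemma reach_rank_up_arc v x y : up_arc x y -> reach_rank v x < reach_rank v y.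
Proof.
move=> axy; have := reaches_up_arc (v := v) axy; have /andP[lt _] := axy.
have := ltn_ord (col x); rewrite /reach_rank.
by case: (reaches y v); case: (reaches x v) => //= *; lia.
Qed.

Lemma filter_reach_perm_up_arc v x y : up_arc x y ->
  [seq z <- reach_perm v | (z == x) || (z == y)] = [:: x; y].
Proof. by move=> axy; rewrite filter2_sort_by ?enum_uniq ?reach_rank_up_arc //= !mem_enum. Qed.

Lemma filter_special_segment_up_arc u v x y : special_pair u v -> up_arc x y ->
  [seq z <- special_segment u v | (z == x) || (z == y)] = [:: x; y; x; y].
Proof.
case/and3P=> /eqP cu /eqP cv uvH axy; have /andP[lt xyH] := axy.
have xv : x != v by apply: contraTneq lt => ->; rewrite cv; have := ltn_ord (col y); lia.
have yu : y != u by apply: contraTneq lt => ->; rewrite cu.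
rewrite !filter_cat !filter2_sort_by ?enum_uniq //= !mem_enum !in_setC1.
rewrite xv yu (eq_sym u y) (negbTE yu) (eq_sym v x) (negbTE xv) /=.
have [exu|nxu] := eqVneq x u; have [eyv|nyv] := eqVneq y v => //=.
- by move: uvH; rewrite -exu -eyv xyH.
- by rewrite exu.
- by rewrite eyv.
Qed.

Lemma filter_pair_block_up_arc u v x y : up_arc x y ->
  [seq z <- pair_block u v | (z == x) || (z == y)] =
  repeat2 x y (if special_pair u v then 4 else 2).
Proof.
move=> axy; rewrite !filter_cat !filter_reach_perm_up_arc //.
by case: ifP => // sp; rewrite filter_special_segment_up_arc.
Qed.

Lemma alternate_up_arc x y : up_arc x y -> alternate colouring_word x y.
Proof.
move=> axy; rewrite /alternate /colouring_word filter_flatten -map_comp.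
rewrite (eq_map (g := repeat2 x y \o fun p => if special_pair p.1 p.2 then 4 else 2));
  last first.
  by move=> p; exact: filter_pair_block_up_arc.
by rewrite map_comp flatten_repeat2; apply/neq_sorted_repeat2/up_arc_neq.
Qed.

Lemma infix_filter_pair_block (P : pred V) x y :
  infix [seq z <- pair_block x y | P z] [seq z <- colouring_word | P z].
Proof.
rewrite /colouring_word filter_flatten; apply/infix_flatten/map_f.
by apply/mapP; exists (x, y); rewrite ?mem_enum.
Qed.

Lemma special_pair_reaches x y :
  x != y -> [set x; y] \notin H -> reaches x y -> special_pair x y.
Proof.
move=> nxy xyH; rewrite /reaches /up_arc.
case/or3P=> [/eqP exy|/andP[_ xyH']|/existsP[w /andP[/andP[lt1 _] /andP[lt2 _]]]].
- by rewrite exy eqxx in nxy.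
- by rewrite xyH' in xyH.
- by rewrite /special_pair; apply/and3P; split=> //; apply/eqP; have := ltn_ord (col y); lia.
Qed.

Lemma filter_special_segment_self x y : special_pair x y ->
  [seq z <- special_segment x y | (z == x) || (z == y)] = [:: x; x; y; y].
Proof.
case/and3P=> /eqP cx /eqP cy _.
have nxy : x != y by apply: contra_eqN cy => /eqP <-; rewrite cx.
rewrite !filter_cat !filter2_sort_by ?enum_uniq ?cx ?cy //= !mem_enum !in_setC1.
by rewrite !eqxx (eq_sym y x) (negbTE nxy).
Qed.

Lemma stutter_special_pair x y : special_pair x y ->
  infix [:: x; x] [seq z <- colouring_word | (z == x) || (z == y)].
Proof.
move=> sp; apply: infix_trans (infix_filter_pair_block _ x y).
rewrite /pair_block (ifT _ _ sp) 2!filter_cat filter_special_segment_self //.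
by apply: infix_catl; apply: infix_catl; apply: (prefix_infix [:: x; x]).
Qed.

Lemma not_alternate_nonedge x y :
  x != y -> [set x; y] \notin H -> ~~ alternate colouring_word x y.
Proof.
move=> nxy xyH; have yxH : [set y; x] \notin H by rewrite setUC.
have [/(special_pair_reaches nxy xyH)/stutter_special_pair|not_reach_xy] := boolP (reaches x y).
  exact: not_sorted_stutter.
have [/(special_pair_reaches _ yxH)/stutter_special_pair|not_reach_yx] := boolP (reaches y x).
  by rewrite alternateC eq_sym => /(_ nxy); exact: not_sorted_stutter.
apply: (not_sorted_stutter (z := y)); apply: infix_trans (infix_filter_pair_block _ x y).
have reach_rank_self u v : ~~ reaches v u -> reach_rank u u < reach_rank u v.
  by move=> nvu; rewrite /reach_rank reachesxx (negbTE nvu); have := ltn_ord (col u); lia.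
rewrite /pair_block 2!filter_cat filter2_sort_by ?enum_uniq ?reach_rank_self //.
rewrite filter2C filter2_sort_by ?enum_uniq ?reach_rank_self //= !mem_enum.
by apply: (@infix_catl _ _ _ [:: x]); apply: (prefix_infix [:: y; y]).
Qed.

Lemma represents_colouring_word : represents colouring_word H.
Proof.
split=> [x|x y nxy].
  apply/flattenP; exists (pair_block x x); last by rewrite !mem_cat mem_sort mem_enum.
  by apply/mapP; exists (x, x); rewrite ?mem_enum.
have [xyH|xyH] := boolP ([set x; y] \in H); last by apply/esym/negbTE/not_alternate_nonedge.
apply/esym; have := col_proper nxy xyH; rewrite neq_ltn => /orP[lt|lt].
  by apply: alternate_up_arc; rewrite /up_arc lt xyH.
by rewrite alternateC; apply: alternate_up_arc; rewrite /up_arc lt setUC xyH.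
Qed.

End ThreeColourable.

Lemma word_representable_of_3_colouring (V : finType) (H : {set {set V}})
    (col : V -> 'I_3) :
  simple_graph H -> (forall x y, x != y -> [set x; y] \in H -> col x != col y) ->
  word_representable H.
Proof.
move=> simpleH col_proper; split=> //.
by exists (colouring_word H col); apply: represents_colouring_word.
Qed.

Lemma exists_le_mean (T : finType) (F : T -> nat) : 0 < #|T| ->
  exists t, #|T| * F t <= \sum_t F t.
Proof.
case/card_gt0P=> t0 _; have [t _ Fmin] := @arg_minnP _ t0 xpredT F isT.
by exists t; rewrite -sum_nat_const; apply: leq_sum => s _; apply: Fmin.
Qed.

(* Adding a constant to the colour of y is injective on the colourings with f x = f y. *)
Lemma card_ffun_eq_le (aT : finType) n (x y : aT) : x != y ->
  n.+1 * #|[set f : {ffun aT -> 'I_n.+1} | f x == f y]| <= #|{ffun aT -> 'I_n.+1}|.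
Proof.
move=> nxy; pose shift (p : 'I_n.+1 * {ffun aT -> 'I_n.+1}) :=
  [ffun v => if v == y then (p.2 v + p.1)%R else p.2 v].
rewrite [X in X * _](_ : _ = #|[set: 'I_n.+1]|); last by rewrite cardsT card_ord.
rewrite -cardsX -(card_in_imset (f := shift)) ?max_card //.
move=> [k1 f1] [k2 f2]; rewrite !inE /= => /eqP f1xy /eqP f2xy eq_shift.
have shiftE v := congr1 (fun g : {ffun aT -> 'I_n.+1} => g v) eq_shift.
have ek : k1 = k2.
  by move: (shiftE x) (shiftE y); rewrite !ffunE eqxx (negbTE nxy) -f1xy -f2xy => -> /addrI.
congr pair => //; apply/ffunP => v; move: (shiftE v); rewrite !ffunE ek.
by case: (v == y) => // /addIr.
Qed.

Lemma dinjectiveb_set2 (aT : finType) (rT : eqType) (f : aT -> rT) x y : x != y ->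
  dinjectiveb f [set x; y] = (f x != f y).
Proof.
move=> nxy; apply/dinjectiveP/idP => [inj_f|nf].
  by apply: contra nxy => /eqP/inj_f ->; rewrite ?set21 ?set22.
move=> a b /set2P[]-> /set2P[]-> // /eqP; by rewrite ?(negbTE nf) // eq_sym (negbTE nf).
Qed.

Lemma exists_colouring_few_monochromatic (V : finType) (E : {set {set V}}) :
  simple_graph E ->
  exists f : {ffun V -> 'I_3}, 3 * #|[set e in E | ~~ dinjectiveb f e]| <= #|E|.
Proof.
move=> simpleE; set N := #|{ffun V -> 'I_3}|.
pose mono (f : {ffun V -> 'I_3}) := #|[set e in E | ~~ dinjectiveb f e]|.
have double_count :
    \sum_f mono f = \sum_(e in E) #|[set f : {ffun V -> 'I_3} | ~~ dinjectiveb f e]|.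
  rewrite (eq_bigr (fun f : {ffun V -> 'I_3} => \sum_(e in E) ~~ dinjectiveb f e)); last first.
    by move=> f _; rewrite /mono -sum1dep_card big_mkcondr.
  by rewrite exchange_big; apply: eq_bigr => e _; rewrite -sum1dep_card [RHS]big_mkcond.
have per_edge e : e \in E -> 3 * #|[set f : {ffun V -> 'I_3} | ~~ dinjectiveb f e]| <= N.
  move=> eE; have /cards2P[x [y [nxy ->]]] : #|e| == 2 by rewrite simpleE.
  rewrite (_ : [set f | _] = [set f : {ffun V -> 'I_3} | f x == f y]).
    exact: card_ffun_eq_le.
  by apply/setP => f; rewrite !inE dinjectiveb_set2 // negbK.
have N_gt0 : 0 < N by apply/card_gt0P; exists [ffun => ord0].
have [f mean] := exists_le_mean mono N_gt0.
exists f; rewrite -(leq_pmul2l N_gt0) mulnCA (leq_trans (leq_mul (leqnn 3) mean)) //.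
rewrite double_count big_distrr mulnC -sum_nat_const; exact: leq_sum.
Qed.

Lemma distance_bounds (d m C : nat) : 3 * d <= m -> d + m <= C ->
  (d%:Q <= Num.min (m%:Q / 3%:Q) (C%:Q - m%:Q))%R /\ (d%:Q / C%:Q <= 1%:Q / 4%:Q)%R.
Proof.
move=> le3dm ledmC; rewrite !pmulrn.
have le3dm_Q : (3%:R * d%:R <= m%:R :> rat)%R by rewrite -natrM ler_nat.
have ledmC_Q : (d%:R + m%:R <= C%:R :> rat)%R by rewrite -natrD ler_nat.
have d_ge0 : (0 <= d%:R :> rat)%R by rewrite ler0n.
split; first by rewrite le_min; apply/andP; split; lra.
have [->|C_gt0] := posnP C; first by rewrite invr0 mulr0; lra.
by rewrite ler_pdivrMr ?ltr0n //; lra.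
Qed.

Lemma card_symdiff_sub (T : finType) (A B : {set T}) : A \subset B ->
  #|symdiff A B| = #|B| - #|A|.
Proof.
move=> subAB; rewrite (_ : symdiff A B = B :\: A) ?cardsD ?(setIidPr subAB) //.
apply/setP => t; rewrite /symdiff !inE; have := subsetP subAB t.
by case: (t \in A) (t \in B) => [] [] // /(_ isT).
Qed.

Lemma complete_word_representable (V : finType) :
  word_representable [set e : {set V} | #|e| == 2].
Proof.
split=> [e|]; first by rewrite inE => /eqP.
exists (enum V); split=> [x|x y nxy]; first by rewrite mem_enum.
by rewrite inE cards2 nxy; apply/esym/neq_sorted_uniq/filter_uniq/enum_uniq.
Qed.

Theorem mainTheorem4 (V : finType) (E : {set {set V}}) :
  simple_graph E ->
  exists H : {set {set V}},
    word_representable H /\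
    (#|symdiff E H|%:Q <= Num.min (#|E|%:Q / 3%:Q) ('C(#|V|, 2)%:Q - #|E|%:Q))%R /\
    (#|symdiff E H|%:Q / 'C(#|V|, 2)%:Q <= 1%:Q / 4%:Q)%R.
Proof.
move=> simpleE; set K := [set e : {set V} | #|e| == 2].
have subEK : E \subset K by apply/subsetP => e eE; rewrite inE simpleE.
have leEC : #|E| <= 'C(#|V|, 2) by rewrite -card_draws subset_leq_card.
have [f few_mono] := exists_colouring_few_monochromatic simpleE.
case: (leqP (4 * #|E|) (3 * 'C(#|V|, 2))) => dense.
  exists [set e in E | dinjectiveb f e]; split.
    apply: (@word_representable_of_3_colouring _ _ f) => [e|x y nxy].
      by rewrite inE => /andP[eE _]; apply: simpleE.
    by rewrite inE dinjectiveb_set2 // => /andP[].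
  have -> : symdiff E [set e in E | dinjectiveb f e] = [set e in E | ~~ dinjectiveb f e].
    by apply/setP => e; rewrite /symdiff !inE; case: (e \in E); case: dinjectiveb.
  by apply: distance_bounds; lia.
exists K; split; first exact: complete_word_representable.
by rewrite card_symdiff_sub // card_draws; apply: distance_bounds; lia.
Qed.
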